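(* Let $u,u_h^{(2)},\tilde u,\tilde u_1,\tilde u_2$ be elements of $\bigcap_{i=1}^N\mathcal{D}(J_i)$. Suppose that, for each $i\in\{1,\dots,N\}$ and each $k\in\{1,2\}$, one has $|J_i(u)-J_i(u_h^{(2)})|<b_h|J_i(u)-J_i(\tilde u_k)|$, for some $b_h<b_0$ with a fixed $b_0\in(0,1)$. Suppose also that for all $i=1,\dots,N$, $$J_i(u_h^{(2)})\notin[\min\{J_i(\tilde u_1),J_i(\tilde u_2)\},\ \max\{J_i(\tilde u_1),J_i(\tilde u_2)\}].$$ Then: if $|J_i(u)-J_i(\tilde u_1)|\le|J_i(u)-J_i(\tilde u_2)|$ for all $i\in\{1,\dots,N\}$, it follows that $J_{\mathfrak{E}}(\tilde u_1)\le J_{\mathfrak{E}}(\tilde u_2)$.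
   Context: Let $U$ be a real Banach space. Let $J_1,\dots,J_N$ be real-valued functionals with domains $\mathcal{D}(J_i)\subseteq U$. In the application, $u$ is the exact solution of a nonlinear problem, $u_h^{(2)}$ is a discrete solution on an enriched finite element space, and $\tilde u$ is a fixed approximation. Write $\vec J(v):=(J_1(v),\dots,J_N(v))$, and for $x\in\mathbb{R}^N$ write $|x|_N:=(|x_1|,\dots,|x_N|)$. For $M\subseteq\mathbb{R}^N$, an error-weighting function is a map $\mathfrak{E}:(\mathbb{R}^+_0)^N\times M\to\mathbb{R}^+_0$ such that for every $m\in M$: - $\mathfrak{E}(\cdot,m)\in\mathcal{C}^1((\mathbb{R}^+_0)^N,\mathbb{R}^+_0)$; - $\mathfrak{E}(\cdot,m)$ is strictly monotonically increasing in each component; - $\mathfrak{E}(0,m)=0$. Fix such an $\mathfrak{E}$ with $\vec J(\tilde u)\in M$, and define $J_{\mathfrak{E}}(v):=\mathfrak{E}(|\vec J(u_h^{(2)})-\vec J(v)|_N,\vec J(\tilde u))$ for $v\in\bigcap_{i=1}^N\mathcal{D}(J_i)$. *)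

From HB Require Import structures.
From mathcomp Require Import all_boot all_order all_algebra.
From mathcomp Require Import all_classical all_reals all_analysis.
Set Implicit Arguments. Unset Strict Implicit. Unset Printing Implicit Defensive.
Import Order.TTheory GRing.Theory Num.Theory.
Import numFieldNormedType.Exports.
Local Open Scope classical_set_scope.
Local Open Scope ring_scope.

Section Defs.
Variables (R : realType) (N : nat).

Definition orthant : set 'rV[R]_N := [set x | forall i : 'I_N, 0 <= x ord0 i].

Definition absN (x : 'rV[R]_N) : 'rV[R]_N := \row_i `|x ord0 i|.

Definition evec (i : 'I_N) : 'rV[R]_N := \row_j (if j == i then 1 else 0).

Definition C1_orthant (f : 'rV[R]_N -> R) : Prop :=
  exists (g : 'rV[R]_N -> R) (O : set 'rV[R]_N),
    [/\ open O, orthant `<=` O,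
        (forall x, orthant x -> g x = f x) &
        (forall x, O x -> differentiable g x /\
           forall i : 'I_N, {for x, continuous ('D_(evec i) g)})].

Definition strict_incr_each (f : 'rV[R]_N -> R) : Prop :=
  forall (i : 'I_N) (x y : 'rV[R]_N), orthant x -> orthant y ->
    (forall j, j != i -> x ord0 j = y ord0 j) -> x ord0 i < y ord0 i ->
    f x < f y.

Definition error_weighting (M : set 'rV[R]_N)
    (E : 'rV[R]_N -> 'rV[R]_N -> R) : Prop :=
  forall m, M m ->
    [/\ (forall x, orthant x -> 0 <= E x m),
        C1_orthant (E ^~ m),
        strict_incr_each (E ^~ m) &
        E 0 m = 0].

Definition vecJ (U : Type) (J : 'I_N -> U -> R) (v : U) : 'rV[R]_N :=
  \row_i J i v.

Definition JE (U : Type) (J : 'I_N -> U -> R) (E : 'rV[R]_N -> 'rV[R]_N -> R)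
    (uh2 ut v : U) : R :=
  E (absN (vecJ J uh2 - vecJ J v)) (vecJ J ut).

End Defs.

From HB Require Import structures.
From mathcomp Require Import all_boot all_order all_algebra.
From mathcomp Require Import all_classical all_reals all_analysis.
Import Order.TTheory GRing.Theory Num.Theory.
Import numFieldNormedType.Exports.
Local Open Scope classical_set_scope.
Local Open Scope ring_scope.

(* Proof: componentwise, J_i(u) is closer to J_i(u_h^(2)) than to either
   J_i(u~_k), and J_i(u_h^(2)) lies on one side of both J_i(u~_k); hence
   J_i(u) lies strictly on that same side, so ordering the J_i(u~_k) by their
   distance to J_i(u) orders them by their distance to J_i(u_h^(2)) too.
   Then |J(u_h^(2)) - J(u~_1)|_N <= |J(u_h^(2)) - J(u~_2)|_N componentwise,
   and a function strictly increasing in each component on the orthant is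
   monotone for the componentwise order. *)

Section DistanceOrder.
Context {R : realDomainType}.

Lemma dist_lt_of_scaled_dist_lt [x h a b : R] :
  b <= 1 -> `|x - h| < b * `|x - a| -> `|x - h| < `|x - a|.
Proof. by move=> b1 /lt_le_trans; apply; rewrite ler_piMl. Qed.

Lemma lt_of_dist_lt_left [x h a : R] : h < a -> `|x - h| < `|x - a| -> x < a.
Proof.
move=> ha; apply: contraTT; rewrite -!leNgt => ax.
rewrite !ger0_norm ?subr_ge0 ?(le_trans (ltW ha)) //.
by rewrite lerD2l lerN2 ltW.
Qed.

Lemma dist_le_of_closer_left [x h a1 a2 : R] :
  h < a1 -> h < a2 -> `|x - h| < `|x - a1| -> `|x - h| < `|x - a2| ->
  `|x - a1| <= `|x - a2| -> `|h - a1| <= `|h - a2|.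
Proof.
move=> ha1 ha2 /(lt_of_dist_lt_left ha1) xa1 /(lt_of_dist_lt_left ha2) xa2.
rewrite !(distrC x) !(distrC h) !gtr0_norm ?subr_gt0 //.
by rewrite !lerD2r.
Qed.

Lemma dist_le_of_closer_outside [x h a1 a2 : R] :
  ~ (Num.min a1 a2 <= h <= Num.max a1 a2) ->
  `|x - h| < `|x - a1| -> `|x - h| < `|x - a2| ->
  `|x - a1| <= `|x - a2| -> `|h - a1| <= `|h - a2|.
Proof.
move=> /negP; rewrite negb_and -!ltNge lt_min gt_max.
case/orP=> /andP[h_a1 h_a2]; first exact: dist_le_of_closer_left.
have oppB (y z : R) : `|- y - - z| = `|y - z| by rewrite -opprD normrN.
rewrite -(oppB x h) -(oppB x a1) -(oppB x a2) -(oppB h a1) -(oppB h a2).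
by apply: dist_le_of_closer_left; rewrite ltrN2.
Qed.

End DistanceOrder.

Section OrthantMonotone.
Context {R : realType} {N : nat}.
Implicit Types x y : 'rV[R]_N.

Lemma orthant_absN x : orthant (absN x).
Proof. by move=> i; rewrite mxE. Qed.

Definition splice x y (k : nat) : 'rV[R]_N :=
  \row_j (if (j < k)%N then y ord0 j else x ord0 j).

Lemma orthant_splice x y k : orthant x -> orthant y -> orthant (splice x y k).
Proof. by move=> Ox Oy j; rewrite mxE; case: ifP. Qed.

Lemma splice0 x y : splice x y 0 = x.
Proof. by apply/rowP => j; rewrite mxE. Qed.

Lemma spliceN x y : splice x y N = y.
Proof. by apply/rowP => j; rewrite mxE ltn_ord. Qed.

Lemma splice_le_spliceS (f : 'rV[R]_N -> R) x y k (kN : (k < N)%N) :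
  strict_incr_each f -> orthant x -> orthant y ->
  x ord0 (Ordinal kN) <= y ord0 (Ordinal kN) ->
  f (splice x y k) <= f (splice x y k.+1).
Proof.
set i := Ordinal kN => f_incr Ox Oy xy_i.
have same_off_i j : j != i -> splice x y k ord0 j = splice x y k.+1 ord0 j.
  move=> ji; rewrite !mxE ltnS [(j <= k)%N]leq_eqVlt.
  suff /negbTE -> : nat_of_ord j != k by [].
  by apply: contra ji => /eqP jk; apply/eqP/val_inj.
have at_x : splice x y k ord0 i = x ord0 i by rewrite mxE ltnn.
have at_y : splice x y k.+1 ord0 i = y ord0 i by rewrite mxE ltnSn.
move: xy_i; rewrite le_eqVlt => /orP[/eqP xy_i | xy_i].
  suff -> : splice x y k = splice x y k.+1 by [].
  apply/rowP => j; have [->|ji] := eqVneq j i; last exact: same_off_i.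
  by rewrite at_x at_y.
apply/ltW/(f_incr i); try exact: orthant_splice; first exact: same_off_i.
by rewrite at_x at_y.
Qed.

Lemma strict_incr_each_le [f : 'rV[R]_N -> R] [x y] :
  strict_incr_each f -> orthant x -> orthant y ->
  (forall i, x ord0 i <= y ord0 i) -> f x <= f y.
Proof.
move=> f_incr Ox Oy xy.
suff: forall k, (k <= N)%N -> f x <= f (splice x y k).
  by move/(_ N); rewrite spliceN; apply.
elim=> [|k IHk] kN; first by rewrite splice0.
apply: le_trans (IHk (ltnW kN)) _; exact: splice_le_spliceS.
Qed.

End OrthantMonotone.

Theorem mainTheorem4 (R : realType) (U : completeNormedModType R) (N : nat)
    (D : 'I_N -> set U) (J : 'I_N -> U -> R)
    (M : set 'rV[R]_N) (E : 'rV[R]_N -> 'rV[R]_N -> R)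
    (u uh2 ut ut1 ut2 : U) (bh b0 : R) :
  error_weighting M E ->
  M (vecJ J ut) ->
  (forall i, D i u /\ D i uh2 /\ D i ut /\ D i ut1 /\ D i ut2) ->
  0 < b0 -> b0 < 1 -> bh < b0 ->
  (forall i, `|J i u - J i uh2| < bh * `|J i u - J i ut1|) ->
  (forall i, `|J i u - J i uh2| < bh * `|J i u - J i ut2|) ->
  (forall i, ~ (Num.min (J i ut1) (J i ut2) <= J i uh2
                <= Num.max (J i ut1) (J i ut2))) ->
  (forall i, `|J i u - J i ut1| <= `|J i u - J i ut2|) ->
  JE J E uh2 ut ut1 <= JE J E uh2 ut ut2.
Proof.
move=> E_weight M_ut _ _ b0_lt1 bh_lt_b0 close1 close2 outside closer.
have [_ _ E_incr _] := E_weight _ M_ut.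
have bh_le1 : bh <= 1 by rewrite ltW // (lt_trans bh_lt_b0).
rewrite /JE; apply: strict_incr_each_le E_incr (orthant_absN _) (orthant_absN _) _ => i.
rewrite !mxE; apply: dist_le_of_closer_outside (outside i) _ _ (closer i).
- exact: dist_lt_of_scaled_dist_lt bh_le1 (close1 i).
- exact: dist_lt_of_scaled_dist_lt bh_le1 (close2 i).
Qed.
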